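(* Let $A \subseteq \mathbb{N}$ be a normal set. Then there exist $x,y,z \in A$ with $x \neq y$ such that $xy = z^2$.
   Context: $\mathbb{N} = \{1,2,3,\dots\}$. An infinite binary sequence $(\lambda_i)_{i \ge 1}$ is called normal if every finite binary word $\omega$ of length $|\omega|$ occurs in the sequence with asymptotic frequency $2^{-|\omega|}$, i.e. the number of $i \le N$ with $(\lambda_i,\dots,\lambda_{i+|\omega|-1}) = \omega$, divided by $N$, tends to $2^{-|\omega|}$ as $N \to \infty$. A set $B \subseteq \mathbb{N}$ is called normal if its indicator sequence ($\lambda_i = 1$ iff $i \in B$) is normal. *)

From Stdlib Require Import Reals Lra Lia Arith List.
Open Scope R_scope.

(* A subset of N = {1,2,3,...} is represented by its indicator
   A : nat -> bool; only the values at i >= 1 matter. *)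

Fixpoint occurs_at (lam : nat -> bool) (i : nat) (w : list bool) : bool :=
  match w with
  | nil => true
  | b :: w' => Bool.eqb (lam i) b && occurs_at lam (S i) w'
  end.

(* number of i with 1 <= i <= N such that w occurs at position i *)
Fixpoint occ_count (lam : nat -> bool) (w : list bool) (N : nat) : nat :=
  match N with
  | O => O
  | S N' => occ_count lam w N' + (if occurs_at lam N w then 1 else 0)
  end.

Definition normal_seq (lam : nat -> bool) : Prop :=
  forall w : list bool,
    Un_cv (fun N => INR (occ_count lam w N) / INR N) ((/ 2) ^ length w).

Definition normal_set (A : nat -> bool) : Prop := normal_seq A.

From Stdlib Require Import Reals Arith List Bool Lra Lia Classical.
Import ListNotations.
Open Scope R_scope.

(** If [A] has no solution of [xy = z^2] with [x <> y], then for every [d] the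
    exponents [k] with [2^k d ∈ A] contain no 3-term arithmetic progression,
    because [(2^i d)(2^k d) = (2^j d)^2] whenever [i + k = 2j]. An exhaustive
    search shows that a 3-AP-free subset of [{0, ..., 16}] has at most 8
    elements, so at most [8D] of the [17D] pairs [(k, e)] with [k < 17] and
    [1 <= e <= D] have [2^k e ∈ A]. On the other hand a normal set meets every
    progression [qℕ] with lower density at least [1/2], which gives about
    [17D/2] such pairs.

    The density bound is a second-moment argument. By normality, the number of
    elements of [A] among [t, t + q, ..., t + (L-1)q] has mean [L/2] and
    variance [L/4] when [t] ranges over [1..N]; restricting [t] to multiples of
    [q] loses at most a factor [q] in the second moment, which is negligible
    against [L^2] once [L] is much larger than [q]. *)

Fixpoint rsum (f : nat -> R) (n : nat) : R :=
  match n with O => 0 | S n => rsum f n + f n end.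

Lemma rsum_ext f g n : (forall k, (k < n)%nat -> f k = g k) -> rsum f n = rsum g n.
Proof.
  induction n as [|n IH]; intros H; simpl; [reflexivity|].
  rewrite IH, H; [reflexivity|lia|intros; apply H; lia].
Qed.

Lemma rsum_le f g n : (forall k, (k < n)%nat -> f k <= g k) -> rsum f n <= rsum g n.
Proof.
  induction n as [|n IH]; intros H; simpl; [lra|].
  apply Rplus_le_compat; [apply IH; intros; apply H|apply H]; lia.
Qed.

Lemma rsum_plus f g n : rsum (fun k => f k + g k) n = rsum f n + rsum g n.
Proof. induction n as [|n IH]; simpl; [lra|]. rewrite IH; lra. Qed.

Lemma rsum_scal c f n : rsum (fun k => c * f k) n = c * rsum f n.
Proof. induction n as [|n IH]; simpl; [lra|]. rewrite IH; lra. Qed.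

Lemma rsum_const c n : rsum (fun _ => c) n = INR n * c.
Proof. induction n as [|n IH]; [simpl; lra|]. cbn [rsum]. rewrite IH, S_INR; lra. Qed.

Lemma rsum_nonneg f n : (forall k, (k < n)%nat -> 0 <= f k) -> 0 <= rsum f n.
Proof.
  intros H. rewrite <- (Rmult_0_r (INR n)), <- rsum_const. now apply rsum_le.
Qed.

Lemma rsum_add_range f a c :
  rsum f (a + c) = rsum f a + rsum (fun r => f (a + r)%nat) c.
Proof.
  induction c as [|c IH]; simpl; [rewrite Nat.add_0_r; lra|].
  rewrite Nat.add_succ_r; simpl; rewrite IH; lra.
Qed.

Lemma rsum_swap (f : nat -> nat -> R) m n :
  rsum (fun i => rsum (fun j => f i j) n) m = rsum (fun j => rsum (fun i => f i j) m) n.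
Proof.
  induction m as [|m IH]; simpl.
  - rewrite rsum_const; lra.
  - rewrite IH, <- rsum_plus; reflexivity.
Qed.

Lemma rsum_subsample (F : nat -> R) gap D : (forall t, 0 <= F t) ->
  rsum (fun d => F (S gap * d + gap)%nat) D <= rsum F (S gap * D).
Proof.
  intros HF. induction D as [|D IH]; [rewrite Nat.mul_0_r; simpl; lra|].
  rewrite Nat.mul_succ_r, rsum_add_range; cbn [rsum].
  assert (0 <= rsum (fun r => F (S gap * D + r)%nat) gap) by (apply rsum_nonneg; auto).
  lra.
Qed.

Lemma rsum_sliding_le (F : nat -> R) D L : (forall t, 0 <= F t) ->
  rsum (fun d => rsum (fun i => F (d + i)%nat) L) D <= INR L * rsum F (D + L).
Proof.
  intros HF. rewrite rsum_swap, <- rsum_const.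
  apply rsum_le; intros i Hi.
  replace (D + L)%nat with (i + (D + (L - i)))%nat by lia.
  rewrite !rsum_add_range.
  assert (0 <= rsum F i) by (apply rsum_nonneg; auto).
  assert (0 <= rsum (fun r => F (i + (D + r))%nat) (L - i)) by (apply rsum_nonneg; auto).
  rewrite (rsum_ext _ (fun d => F (i + d)%nat)) by (intros; f_equal; lia).
  lra.
Qed.

Definition b2R (b : bool) : R := if b then 1 else 0.

Lemma b2R_nonneg b : 0 <= b2R b.
Proof. destruct b; simpl; lra. Qed.

(** * Averages over the windows of a normal sequence *)

Fixpoint window (b : nat -> bool) (t n : nat) : list bool :=
  match n with O => [] | S n => b t :: window b (S t) n end.

Lemma window_length b t n : length (window b t n) = n.
Proof. revert t; induction n; simpl; auto. Qed.

Lemma window_add b t m n : window b t (m + n) = window b t m ++ window b (t + m) n.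
Proof.
  revert t; induction m as [|m IH]; intros t; simpl; [now rewrite Nat.add_0_r|].
  rewrite IH, Nat.add_succ_r; reflexivity.
Qed.

Lemma nth_window b t n i : (i < n)%nat -> nth i (window b t n) false = b (t + i)%nat.
Proof.
  revert t i; induction n as [|n IH]; intros t [|i] Hi; simpl; try lia.
  - now rewrite Nat.add_0_r.
  - rewrite IH by lia. f_equal; lia.
Qed.

Fixpoint words (n : nat) : list (list bool) :=
  match n with
  | O => [[]]
  | S n => map (cons true) (words n) ++ map (cons false) (words n)
  end.

Lemma words_length n w : In w (words n) -> length w = n.
Proof.
  revert w; induction n as [|n IH]; simpl; intros w Hw.
  - now destruct Hw as [<-|[]].
  - apply in_app_or in Hw.
    destruct Hw as [Hw|Hw]; apply in_map_iff in Hw; destruct Hw as [u [<- Hu]];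
      simpl; f_equal; auto.
Qed.

Lemma words_card n : INR (length (words n)) = 2 ^ n.
Proof.
  induction n as [|n IH]; simpl; [lra|].
  rewrite length_app, !length_map, plus_INR, IH; lra.
Qed.

Fixpoint lsum (f : list bool -> R) (l : list (list bool)) : R :=
  match l with [] => 0 | w :: l => f w + lsum f l end.

Lemma lsum_app f l1 l2 : lsum f (l1 ++ l2) = lsum f l1 + lsum f l2.
Proof. induction l1 as [|w l1 IH]; simpl; [lra|]. rewrite IH; lra. Qed.

Lemma lsum_map f h l : lsum f (map h l) = lsum (fun w => f (h w)) l.
Proof. induction l as [|w l IH]; simpl; [reflexivity|]. now rewrite IH. Qed.

Lemma lsum_plus f g l : lsum (fun w => f w + g w) l = lsum f l + lsum g l.
Proof. induction l as [|w l IH]; simpl; [lra|]. rewrite IH; lra. Qed.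

Lemma lsum_scal c f l : lsum (fun w => c * f w) l = c * lsum f l.
Proof. induction l as [|w l IH]; simpl; [lra|]. rewrite IH; lra. Qed.

Lemma lsum_const c l : lsum (fun _ => c) l = INR (length l) * c.
Proof.
  induction l as [|w l IH]; [simpl; lra|].
  cbn [lsum length]. rewrite IH, S_INR; lra.
Qed.

Lemma lsum_ext f g l : (forall w, In w l -> f w = g w) -> lsum f l = lsum g l.
Proof.
  induction l as [|w l IH]; simpl; intros H; [reflexivity|].
  rewrite H, IH; auto.
Qed.

Lemma lsum_occurs_at b t M g :
  lsum (fun w => b2R (occurs_at b t w) * g w) (words M) = g (window b t M).
Proof.
  revert t g; induction M as [|M IH]; intros t g; simpl; [lra|].
  rewrite lsum_app, !lsum_map; simpl occurs_at.
  destruct (b t); simpl.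
  - rewrite (IH (S t) (fun w => g (true :: w))), (lsum_ext _ (fun _ => 0)),
      lsum_const by (intros; simpl; lra). lra.
  - rewrite (IH (S t) (fun w => g (false :: w))), (lsum_ext _ (fun _ => 0)),
      lsum_const by (intros; simpl; lra). lra.
Qed.

Lemma lsum_occ_count b M g N :
  lsum (fun w => INR (occ_count b w N) * g w) (words M)
  = rsum (fun t => g (window b (S t) M)) N.
Proof.
  induction N as [|N IH]; simpl.
  - rewrite (lsum_ext _ (fun _ => 0)), lsum_const by (intros; simpl; lra). lra.
  - rewrite <- IH, <- (lsum_occurs_at b (S N) M g), <- lsum_plus.
    apply lsum_ext; intros w _.
    rewrite plus_INR; unfold b2R; destruct (occurs_at b (S N) w); simpl; lra.
Qed.

Lemma Un_cv_const c : Un_cv (fun _ => c) c.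
Proof.
  intros eps Heps; exists O; intros.
  unfold R_dist; rewrite Rminus_diag, Rabs_R0; exact Heps.
Qed.

Lemma normal_window_average b M g : normal_seq b ->
  Un_cv (fun N => rsum (fun t => g (window b (S t) M)) N / INR N)
        ((/ 2) ^ M * lsum g (words M)).
Proof.
  intros Hb.
  apply (Un_cv_ext (fun N => lsum (fun w => INR (occ_count b w N) / INR N * g w) (words M))).
  { intros N. rewrite <- lsum_occ_count.
    unfold Rdiv; rewrite Rmult_comm, <- lsum_scal.
    apply lsum_ext; intros; ring. }
  rewrite <- lsum_scal.
  assert (Hlen := words_length M).
  induction (words M) as [|w l IH]; simpl.
  - apply Un_cv_const.
  - apply CV_plus; [|apply IH; intros; apply Hlen; simpl; auto].
    apply CV_mult; [|apply Un_cv_const].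
    rewrite <- (Hlen w) by (simpl; auto). apply Hb.
Qed.

(** * Counting along a comb of positions *)

Definition ones (w : list bool) : nat := length (filter (fun b : bool => b) w).

Fixpoint masked_ones (m w : list bool) : nat :=
  match m, w with
  | c :: m, b :: w => ((if c && b then 1 else 0) + masked_ones m w)%nat
  | _, _ => O
  end.

Lemma masked_ones_variance m :
  lsum (fun w => (2 * INR (masked_ones m w) - INR (ones m)) ^ 2) (words (length m))
  = INR (ones m) * 2 ^ length m.
Proof.
  induction m as [|c m IH]; [simpl; lra|].
  cbn [length words]; rewrite lsum_app, !lsum_map, <- lsum_plus.
  destruct c; cbn [masked_ones andb].
  - change (ones (true :: m)) with (S (ones m)).
    rewrite (lsum_ext _ (fun w => 2 + 2 * (2 * INR (masked_ones m w) - INR (ones m)) ^ 2))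
      by (intros; rewrite ?plus_INR, !S_INR; simpl INR; ring).
    rewrite lsum_plus, lsum_const, lsum_scal, IH, words_card, S_INR; simpl pow; ring.
  - change (ones (false :: m)) with (ones m).
    rewrite (lsum_ext _ (fun w => 2 * (2 * INR (masked_ones m w) - INR (ones m)) ^ 2))
      by (intros; rewrite plus_INR; simpl INR; ring).
    rewrite lsum_scal, IH; simpl pow; ring.
Qed.

Lemma masked_ones_app m m' w w' : length m = length w ->
  masked_ones (m ++ m') (w ++ w') = (masked_ones m w + masked_ones m' w')%nat.
Proof.
  revert w; induction m as [|c m IH]; intros [|b w] H; simpl in *; try lia.
  rewrite IH by lia; lia.
Qed.

Lemma masked_ones_repeat_false n w : masked_ones (repeat false n) w = O.
Proof. revert w; induction n; intros [|b w]; simpl; auto. Qed.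

Fixpoint comb (gap L : nat) : list bool :=
  match L with O => [] | S L => comb gap L ++ true :: repeat false gap end.

Lemma comb_length gap L : length (comb gap L) = (L * S gap)%nat.
Proof.
  induction L as [|L IH]; simpl; auto.
  rewrite length_app, IH; simpl; rewrite repeat_length; lia.
Qed.

Lemma ones_comb gap L : ones (comb gap L) = L.
Proof.
  unfold ones; induction L as [|L IH]; simpl; auto.
  rewrite filter_app, length_app, IH; simpl.
  clear IH; induction gap as [|gap IHgap]; simpl; lia.
Qed.

Lemma masked_ones_comb_window b gap L t :
  INR (masked_ones (comb gap L) (window b t (L * S gap)))
  = rsum (fun i => b2R (b (t + i * S gap)%nat)) L.
Proof.
  induction L as [|L IH]; [reflexivity|]; cbn [comb rsum].
  rewrite Nat.mul_succ_l, window_add, masked_ones_app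
    by (rewrite comb_length, window_length; reflexivity).
  rewrite plus_INR, IH; cbn [window masked_ones andb].
  rewrite masked_ones_repeat_false, Nat.add_0_r.
  unfold b2R; destruct (b (t + L * S gap)%nat); simpl; lra.
Qed.

(** * Density of a normal set along multiples *)

Lemma comb_variance gap L :
  (/ 2) ^ (L * S gap)
  * lsum (fun w => (2 * INR (masked_ones (comb gap L) w) - INR L) ^ 2) (words (L * S gap))
  = INR L.
Proof.
  rewrite <- (comb_length gap L).
  rewrite (lsum_ext _ (fun w => (2 * INR (masked_ones (comb gap L) w)
                                 - INR (ones (comb gap L))) ^ 2))
    by (intros; now rewrite ones_comb).
  rewrite masked_ones_variance, ones_comb.
  replace ((/ 2) ^ length (comb gap L) * (INR L * 2 ^ length (comb gap L)))
    with (INR L * ((/ 2) ^ length (comb gap L) * 2 ^ length (comb gap L))) by ring.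
  rewrite <- Rpow_mult_distr, Rinv_l, pow1 by lra; ring.
Qed.

Definition multiples_count (A : nat -> bool) (q D : nat) : R :=
  rsum (fun e => b2R (A (q * S e)%nat)) D.

Definition block_count (A : nat -> bool) (q L d : nat) : R :=
  rsum (fun i => b2R (A (q * S (d + i))%nat)) L.

Lemma rsum_block_count_le A q L D :
  rsum (block_count A q L) D <= INR L * multiples_count A q (D + L).
Proof.
  apply (rsum_sliding_le (fun e => b2R (A (q * S e)%nat))); intros; apply b2R_nonneg.
Qed.

Lemma average_eventually_le (u : nat -> R) l :
  Un_cv (fun N => u N / INR N) l ->
  exists N0, forall N, (N0 <= N)%nat -> u N <= (l + 1) * INR N.
Proof.
  intros Hu. destruct (Hu 1 Rlt_0_1) as [N0 HN0].
  exists (S N0); intros N HN.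
  assert (HNpos : 0 < INR N) by (apply lt_0_INR; lia).
  specialize (HN0 N ltac:(lia)); unfold R_dist in HN0; apply Rabs_def2 in HN0.
  assert (Hlt : u N / INR N * INR N <= (l + 1) * INR N)
    by (apply Rmult_le_compat_r; lra).
  unfold Rdiv in Hlt; rewrite Rmult_assoc, Rinv_l, Rmult_1_r in Hlt; lra.
Qed.

Lemma block_count_second_moment A q L : normal_seq A -> (1 <= q)%nat ->
  exists D0, forall D, (D0 <= D)%nat ->
    rsum (fun d => (2 * block_count A q L d - INR L) ^ 2) D <= (INR L + 1) * INR (q * D).
Proof.
  intros HA Hq. destruct q as [|gap]; [lia|].
  pose proof (normal_window_average A (L * S gap)
                (fun w => (2 * INR (masked_ones (comb gap L) w) - INR L) ^ 2) HA) as Hcv.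
  rewrite comb_variance in Hcv.
  set (M := (L * S gap)%nat) in *.
  set (g := fun w => (2 * INR (masked_ones (comb gap L) w) - INR L) ^ 2) in *.
  destruct (average_eventually_le _ _ Hcv) as [N0 HN0].
  exists N0; intros D HD.
  rewrite (rsum_ext _ (fun d => g (window A (S (S gap * d + gap)) M))).
  2:{ intros d _. unfold g, M, block_count. rewrite masked_ones_comb_window.
      do 3 f_equal. apply rsum_ext; intros i _. do 2 f_equal. nia. }
  eapply Rle_trans; [apply (rsum_subsample (fun t => g (window A (S t) M)))|].
  - intros; apply pow2_ge_0.
  - apply HN0; nia.
Qed.

Lemma neg_le_sq_div (x c : R) : 0 < c -> - x <= x ^ 2 / (2 * c) + c / 2.
Proof.
  intros Hc.
  assert (0 <= (x + c) ^ 2 / (2 * c))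
    by (apply Rmult_le_pos; [apply pow2_ge_0|left; apply Rinv_0_lt_compat; lra]).
  replace (x ^ 2 / (2 * c) + c / 2) with ((x + c) ^ 2 / (2 * c) - x) by (field; lra).
  lra.
Qed.

Lemma rsum_neg_le_sq_div (x : nat -> R) c D : 0 < c ->
  rsum (fun d => - x d) D <= / (2 * c) * rsum (fun d => x d ^ 2) D + INR D * (c / 2).
Proof.
  intros Hc. rewrite <- rsum_scal, <- rsum_const, <- rsum_plus.
  apply rsum_le; intros d _.
  rewrite (Rmult_comm (/ (2 * c))); apply neg_le_sq_div, Hc.
Qed.

(* Taking [L = n^2 q] positions makes the second-moment deviation [sqrt (q L) = n q]
   a fraction [1/n] of [L]. *)
Lemma multiples_count_lower_bound A q n : normal_seq A -> (1 <= q)%nat -> (1 <= n)%nat ->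
  exists D0, forall D, (D0 <= D)%nat ->
    (INR n - 2) * INR D <= 2 * INR n * multiples_count A q (D + n * n * q).
Proof.
  intros HA Hq Hn.
  set (L := (n * n * q)%nat).
  destruct (block_count_second_moment A q L HA Hq) as [D0 HD0].
  exists D0; intros D HD.
  set (Nr := INR n); set (Q := INR q).
  assert (HL : INR L = Nr * Nr * Q) by (unfold L; rewrite !mult_INR; reflexivity).
  assert (HN : 1 <= Nr) by (apply (le_INR 1); lia).
  assert (HQ : 1 <= Q) by (apply (le_INR 1); lia).
  assert (HDpos : 0 <= INR D) by apply pos_INR.
  pose proof (rsum_block_count_le A q L D) as Hblocks.
  pose proof (HD0 D HD) as Hsq; rewrite mult_INR in Hsq; fold Q in Hsq.
  pose proof (rsum_neg_le_sq_div (fun d => 2 * block_count A q L d - INR L) (Nr * Q) D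
                ltac:(nra)) as Hdev.
  rewrite (rsum_ext _ (fun d => INR L + (-2) * block_count A q L d)),
    rsum_plus, rsum_const, rsum_scal in Hdev by (intros; ring).
  set (X := rsum (fun d => (2 * block_count A q L d - INR L) ^ 2) D) in *.
  assert (HX : / (2 * (Nr * Q)) * X <= Nr * Q * INR D).
  { apply (Rmult_le_reg_l (2 * (Nr * Q))); [nra|].
    rewrite <- Rmult_assoc, Rinv_r, Rmult_1_l by nra.
    assert (0 <= (Nr * Nr * Q - 1) * (Q * INR D)) by (apply Rmult_le_pos; nra).
    rewrite HL in Hsq; nra. }
  apply (Rmult_le_reg_l (Nr * Q)); [nra|].
  rewrite HL in Hdev, Hblocks.
  assert (Nr * Q * INR D >= 0) by (apply Rle_ge, Rmult_le_pos; nra).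
  lra.
Qed.

Lemma multiples_lower_density A q eps : normal_seq A -> (1 <= q)%nat -> 0 < eps ->
  exists D0, forall D, (D0 <= D)%nat -> (1 / 2 - eps) * INR D <= multiples_count A q D.
Proof.
  intros HA Hq Heps.
  destruct (archimed_cor1 (eps / 2)) as [n [Hn Hn0]]; [lra|].
  destruct (multiples_count_lower_bound A q n HA Hq Hn0) as [D1 HD1].
  set (L := (n * n * q)%nat) in *.
  exists (D1 + n * L)%nat; intros D HD.
  assert (HLD : (L <= D)%nat) by nia.
  specialize (HD1 (D - L)%nat ltac:(nia)).
  rewrite Nat.sub_add, minus_INR in HD1 by exact HLD.
  assert (HnR : 0 < INR n) by (apply lt_0_INR; lia).
  assert (Hneps : 2 < INR n * eps).
  { apply (Rmult_lt_compat_l (INR n)) in Hn; [|exact HnR].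
    rewrite Rinv_r in Hn by lra. lra. }
  assert (HnL : INR n * INR L <= INR D) by (rewrite <- mult_INR; apply le_INR; nia).
  assert (0 <= INR L) by apply pos_INR.
  assert (0 <= (INR n * eps - 2) * INR D) by (apply Rmult_le_pos; [lra|apply pos_INR]).
  apply (Rmult_le_reg_l (2 * INR n)); [lra|].
  nra.
Qed.

(** * Three-term progressions among seventeen exponents *)

Definition ap3_free (b : nat -> bool) (n : nat) : Prop :=
  forall i j k, (i < j < k)%nat -> (k < n)%nat -> (i + k = 2 * j)%nat ->
    b i = true -> b j = true -> b k = true -> False.

(* Adding [true] at position [length p] creates no progression [(2j - length p, j, length p)]. *)
Definition ap3_free_at_end (p : list bool) : bool :=
  forallb (fun j => (2 * j <? length p)%nat
                    || negb (nth (2 * j - length p) p false && nth j p false))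
          (seq 0 (length p)).

Fixpoint ap3_free_extensions_ones_le (c r : nat) (p : list bool) : bool :=
  match r with
  | O => (ones p <=? c)%nat
  | S r => (negb (ap3_free_at_end p) || ap3_free_extensions_ones_le c r (p ++ [true]))
           && ap3_free_extensions_ones_le c r (p ++ [false])
  end.

Lemma ap3_free_at_end_window b n :
  ap3_free b (S n) -> b n = true -> ap3_free_at_end (window b 0 n) = true.
Proof.
  intros Hb Hn. unfold ap3_free_at_end; rewrite window_length.
  apply forallb_forall; intros j Hj; apply in_seq in Hj.
  apply orb_true_iff.
  destruct (Nat.ltb_spec (2 * j) n) as [Hlt|Hge]; [now left|right].
  apply negb_true_iff, not_true_iff_false; intros Hij.
  apply andb_true_iff in Hij; destruct Hij as [Hi Hj'].
  rewrite !nth_window in Hi, Hj' by lia.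
  apply (Hb (2 * j - n) j n)%nat; try lia; assumption.
Qed.

Lemma window_snoc b n : window b 0 (S n) = window b 0 n ++ [b n].
Proof. rewrite <- Nat.add_1_r, window_add; reflexivity. Qed.

Lemma ap3_free_extensions_ones_le_sound c r : forall p b,
  ap3_free_extensions_ones_le c r p = true -> p = window b 0 (length p) ->
  ap3_free b (length p + r) -> (ones (window b 0 (length p + r)) <= c)%nat.
Proof.
  induction r as [|r IH]; intros p b Hc Hp Hb.
  - rewrite Nat.add_0_r, <- Hp. now apply Nat.leb_le.
  - simpl in Hc; apply andb_true_iff in Hc; destruct Hc as [Htrue Hfalse].
    assert (Hp' : p ++ [b (length p)] = window b 0 (length (p ++ [b (length p)]))).
    { rewrite length_app, Nat.add_1_r, window_snoc, <- Hp; reflexivity. }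
    replace (length p + S r)%nat with (length (p ++ [b (length p)]) + r)%nat in *
      by (rewrite length_app; simpl; lia).
    apply IH; auto.
    destruct (b (length p)) eqn:Eb; [|exact Hfalse].
    assert (Hend : ap3_free_at_end p = true).
    { rewrite Hp; apply ap3_free_at_end_window; [|exact Eb].
      intros i j k Hijk Hk; apply Hb; [exact Hijk|rewrite length_app; simpl; lia]. }
    now rewrite Hend in Htrue.
Qed.

Lemma ap3_free_17_ones_le_8 b : ap3_free b 17 -> (ones (window b 0 17) <= 8)%nat.
Proof.
  apply (ap3_free_extensions_ones_le_sound 8 17 []); [vm_compute; reflexivity|reflexivity].
Qed.

Lemma ones_window b t n : INR (ones (window b t n)) = rsum (fun i => b2R (b (t + i)%nat)) n.
Proof.
  revert t; induction n as [|n IH]; intros t; [reflexivity|].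
  rewrite <- Nat.add_1_r, window_add, rsum_add_range; unfold ones in *.
  rewrite filter_app, length_app, plus_INR, IH; simpl.
  rewrite Nat.add_0_r; unfold b2R; destruct (b (t + n)%nat); simpl; lra.
Qed.

(** * Square products in a normal set *)

Lemma eventually_forall_lt (P : nat -> nat -> Prop) K :
  (forall k, (k < K)%nat -> exists D0, forall D, (D0 <= D)%nat -> P k D) ->
  exists D0, forall k D, (k < K)%nat -> (D0 <= D)%nat -> P k D.
Proof.
  induction K as [|K IH]; intros H; [exists O; intros; lia|].
  destruct IH as [D1 HD1]; [intros; apply H; lia|].
  destruct (H K) as [D2 HD2]; [lia|].
  exists (D1 + D2)%nat; intros k D Hk HD.
  destruct (Nat.eq_dec k K) as [->|]; [apply HD2|apply HD1]; lia.
Qed.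

Lemma pow2_mul_square i j k d : (i + k = 2 * j)%nat ->
  (2 ^ i * d * (2 ^ k * d) = 2 ^ j * d * (2 ^ j * d))%nat.
Proof.
  intros Hijk.
  replace (2 ^ i * d * (2 ^ k * d))%nat with (2 ^ (i + k) * (d * d))%nat
    by (rewrite Nat.pow_add_r; ring).
  replace (2 * j)%nat with (j + j)%nat in Hijk by lia.
  rewrite Hijk, Nat.pow_add_r; ring.
Qed.

Lemma pow2_ge_1 k : (1 <= 2 ^ k)%nat.
Proof. pose proof (Nat.pow_nonzero 2 k); lia. Qed.

Lemma no_square_product_ap3_free (A : nat -> bool) n :
  ~ (exists x y z : nat,
        (1 <= x)%nat /\ (1 <= y)%nat /\ (1 <= z)%nat /\
        A x = true /\ A y = true /\ A z = true /\
        x <> y /\ (x * y = z * z)%nat) ->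
  forall e, ap3_free (fun k => A (2 ^ k * S e)%nat) n.
Proof.
  intros Hno e i j k [Hij Hjk] _ Hijk Hi Hj Hk; apply Hno.
  exists (2 ^ i * S e)%nat, (2 ^ k * S e)%nat, (2 ^ j * S e)%nat.
  assert (Hlt : (2 ^ i < 2 ^ k)%nat) by (apply Nat.pow_lt_mono_r; lia).
  pose proof (pow2_ge_1 i); pose proof (pow2_ge_1 j); pose proof (pow2_ge_1 k).
  repeat split; try nia; auto using pow2_mul_square.
Qed.

Lemma ap3_free_multiples_count_le A D :
  (forall e, ap3_free (fun k => A (2 ^ k * S e)%nat) 17) ->
  rsum (fun k => multiples_count A (2 ^ k) D) 17 <= 8 * INR D.
Proof.
  intros Hfree.
  unfold multiples_count; rewrite <- rsum_swap, Rmult_comm, <- rsum_const.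
  apply rsum_le; intros e _.
  rewrite <- (ones_window (fun k => A (2 ^ k * S e)%nat) 0).
  replace 8 with (INR 8) by (simpl; lra).
  apply le_INR, ap3_free_17_ones_le_8, Hfree.
Qed.

Theorem mainTheorem5 (A : nat -> bool) :
  normal_set A ->
  exists x y z : nat,
    (1 <= x)%nat /\ (1 <= y)%nat /\ (1 <= z)%nat /\
    A x = true /\ A y = true /\ A z = true /\
    x <> y /\ (x * y = z * z)%nat.
Proof.
  intros HA; apply NNPP; intros Hno.
  destruct (eventually_forall_lt
              (fun k D => (1 / 2 - 1 / 100) * INR D <= multiples_count A (2 ^ k) D) 17)
    as [D0 HD0].
  { intros k _; apply multiples_lower_density; [exact HA|apply pow2_ge_1|lra]. }
  set (D := S D0).
  assert (Hupper := ap3_free_multiples_count_le A D (no_square_product_ap3_free A 17 Hno)).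
  assert (Hlower : INR 17 * ((1 / 2 - 1 / 100) * INR D)
                   <= rsum (fun k => multiples_count A (2 ^ k) D) 17).
  { rewrite <- rsum_const; apply rsum_le; intros k Hk; apply HD0; [exact Hk|lia]. }
  assert (HD : 1 <= INR D) by (apply (le_INR 1); lia).
  replace (INR 17) with 17 in Hlower by (simpl; lra).
  lra.
Qed.
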